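(* Let $n\geq 2$ and let $R$ be the unital associative ring $\langle x,y \mid x^n=0,\ y^n=0,\ xy+y^{n-1}x^{n-1}=1\rangle$. Then $R$ is generated as an additive group by the elements $y^ix^j$ for $0\leq i,j<n$.
   Context: $R$ denotes the quotient of the free unital associative ring $\mathbb{Z}\langle x,y\rangle$ by the two-sided ideal generated by $x^n$, $y^n$ and $xy+y^{n-1}x^{n-1}-1$; $x^0=y^0=1$. *)

From HB Require Import structures.
From mathcomp Require Import all_boot all_order all_algebra.
Set Implicit Arguments. Unset Strict Implicit. Unset Printing Implicit Defensive.
Import GRing.Theory.
Local Open Scope ring_scope.

(* Elements of the free unital associative ring Z<x,y>: formal
   noncommutative polynomial expressions in two variables X, Y. *)
Inductive ncterm : Type :=
  | NCConst of int
  | NCX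
  | NCY
  | NCAdd of ncterm & ncterm
  | NCOpp of ncterm
  | NCMul of ncterm & ncterm.

Fixpoint nceval (A : pzRingType) (x y : A) (t : ncterm) : A :=
  match t with
  | NCConst c => c%:~R
  | NCX => x
  | NCY => y
  | NCAdd s u => nceval x y s + nceval x y u
  | NCOpp s => - nceval x y s
  | NCMul s u => nceval x y s * nceval x y u
  end.

Definition R_relations (n : nat) (A : pzRingType) (x y : A) : Prop :=
  [/\ x ^+ n = 0, y ^+ n = 0 & x * y + y ^+ n.-1 * x ^+ n.-1 = 1].

(* The integer combinations of the monomials y^i x^j (0 <= i, j < n) contain
   1, x and y and are closed under addition and negation, so it suffices to
   show that they are stable under left multiplication by y and by x.  For y
   this is immediate; for x it follows from the commutation rule
   x y^(i+1) = y^i - y^(n-1) x^(n-1-i), obtained from xy = 1 - y^(n-1) x^(n-1)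
   together with y^(n-1) x^k y^k = y^(n-1) for k <= n-1. *)

From mathcomp Require Import all_boot all_order all_algebra.
From mathcomp Require Import zify.
Import GRing.Theory.
Local Open Scope ring_scope.

Section IntegerCombinations.
Context {A : pzRingType} {I J : finType} (F : I -> J -> A).

Definition int_comb (a : A) : Prop :=
  exists c : I -> J -> int, a = \sum_i \sum_j F i j *~ c i j.

Lemma int_comb0 : int_comb 0.
Proof.
exists (fun _ _ => 0); rewrite big1 // => i _.
by rewrite big1 // => j _; rewrite mulr0z.
Qed.

Lemma int_combD a b : int_comb a -> int_comb b -> int_comb (a + b).
Proof.
move=> [c ->] [d ->]; exists (fun i j => c i j + d i j).
rewrite -big_split; apply: eq_bigr => i _; rewrite -big_split.
by apply: eq_bigr => j _; rewrite mulrzDr.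
Qed.

Lemma int_combN a : int_comb a -> int_comb (- a).
Proof.
move=> [c ->]; exists (fun i j => - c i j).
rewrite -sumrN; apply: eq_bigr => i _; rewrite -sumrN.
by apply: eq_bigr => j _; rewrite mulrNz.
Qed.

Lemma int_combMz a z : int_comb a -> int_comb (a *~ z).
Proof.
move=> [c ->]; exists (fun i j => c i j * z).
rewrite mulrz_suml; apply: eq_bigr => i _; rewrite mulrz_suml.
by apply: eq_bigr => j _; rewrite mulrzA.
Qed.

Lemma int_comb_sum (K : Type) (r : seq K) (G : K -> A) :
  (forall k, int_comb (G k)) -> int_comb (\sum_(k <- r) G k).
Proof. by move=> combG; apply: (big_ind int_comb int_comb0 int_combD). Qed.

Lemma int_comb_gen i0 j0 : int_comb (F i0 j0).
Proof.
exists (fun i j => ((i == i0) && (j == j0))%:Z).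
rewrite (bigD1 i0) //= (bigD1 j0) //= !eqxx mulr1z.
rewrite big1 ?addr0 => [|j /negbTE ->]; last by rewrite andbF mulr0z.
rewrite big1 ?addr0 // => i /negbTE neq_i.
by rewrite big1 // => j _; rewrite neq_i mulr0z.
Qed.

Lemma int_comb_mull z a :
  (forall i j, int_comb (z * F i j)) -> int_comb a -> int_comb (z * a).
Proof.
move=> combzF [c ->]; rewrite mulr_sumr; apply: int_comb_sum => i.
rewrite mulr_sumr; apply: int_comb_sum => j.
by rewrite mulrzAr; apply: int_combMz.
Qed.

Lemma int_comb_mulr z a :
  (forall i j, int_comb (F i j * z)) -> int_comb a -> int_comb (a * z).
Proof.
move=> combFz [c ->]; rewrite mulr_suml; apply: int_comb_sum => i.
rewrite mulr_suml; apply: int_comb_sum => j.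
by rewrite mulrzAl; apply: int_combMz.
Qed.

End IntegerCombinations.

Section NormalForm.
Variables (n : nat) (A : pzRingType) (x y : A).
Hypotheses (xn0 : x ^+ n = 0) (yn0 : y ^+ n = 0).
Hypothesis xy_rel : x * y + y ^+ n.-1 * x ^+ n.-1 = 1.

Definition yx_comb : A -> Prop := int_comb (fun i j : 'I_n => y ^+ i * x ^+ j).

Lemma mulxy : x * y = 1 - y ^+ n.-1 * x ^+ n.-1.
Proof. by rewrite -xy_rel addrK. Qed.

Lemma ytop_expx_ytop k : (k < n.-1)%N ->
  y ^+ n.-1 * x ^+ k * y ^+ k = y ^+ n.-1 -> y ^+ n.-1 * x ^+ k * y ^+ n.-1 = 0.
Proof.
move=> lt_k_n1 cancel_k.
have split_top : y ^+ n.-1 = y ^+ k * y ^+ (n.-1 - k).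
  by rewrite -exprD subnKC // ltnW.
have le_n_sum : (n <= n.-1 + (n.-1 - k))%N by lia.
by rewrite {2}split_top mulrA cancel_k -exprD -(subnKC le_n_sum) exprD yn0 mul0r.
Qed.

Lemma ytop_expx_expy k : (k <= n.-1)%N -> y ^+ n.-1 * x ^+ k * y ^+ k = y ^+ n.-1.
Proof.
elim: k => [|k IHk] lt_k_n1; first by rewrite !expr0 !mulr1.
rewrite exprSr exprS !mulrA -(mulrA _ x y) mulxy mulrBr mulr1 !mulrBl.
have cancel_k := IHk (ltnW lt_k_n1).
by rewrite cancel_k !mulrA (ytop_expx_ytop _ lt_k_n1 cancel_k) !mul0r subr0.
Qed.

Lemma ytop_expxS_y k : (k < n.-1)%N ->
  y ^+ n.-1 * x ^+ k.+1 * y = y ^+ n.-1 * x ^+ k.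
Proof.
move=> lt_k_n1; rewrite exprSr !mulrA -(mulrA _ x y) mulxy mulrBr mulr1 !mulrA.
by rewrite (ytop_expx_ytop _ lt_k_n1 (ytop_expx_expy _ (ltnW lt_k_n1))) mul0r subr0.
Qed.

Lemma mulx_expyS i : (i < n)%N ->
  x * y ^+ i.+1 = y ^+ i - y ^+ n.-1 * x ^+ (n.-1 - i).
Proof.
elim: i => [|i IHi] lt_i_n; first by rewrite expr1 expr0 mulxy subn0.
rewrite exprSr mulrA IHi 1?ltnW // mulrBl -exprSr.
by rewrite -[(n.-1 - i)%N](@subnSK i n.-1) ?ytop_expxS_y //; lia.
Qed.

Lemma yx_comb_monomial i j : yx_comb (y ^+ i * x ^+ j).
Proof.
case: (ltnP i n) => [lt_i_n | le_n_i]; last first.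
  by rewrite -(subnK le_n_i) exprD yn0 mulr0 mul0r; apply: int_comb0.
case: (ltnP j n) => [lt_j_n | le_n_j]; last first.
  by rewrite -(subnK le_n_j) exprD xn0 !mulr0; apply: int_comb0.
exact: (int_comb_gen _ (Ordinal lt_i_n) (Ordinal lt_j_n)).
Qed.

Lemma yx_comb_mulyl a : yx_comb a -> yx_comb (y * a).
Proof. by apply: int_comb_mull => i j; rewrite mulrA -exprS; apply: yx_comb_monomial. Qed.

Lemma yx_comb_mulxl a : yx_comb a -> yx_comb (x * a).
Proof.
apply: int_comb_mull => -[[|i] lt_i_n] j /=.
  by rewrite expr0 mul1r -exprS -[x ^+ _]mul1r -(expr0 y); apply: yx_comb_monomial.
rewrite mulrA mulx_expyS 1?ltnW // mulrBl -mulrA -exprD.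
by apply: int_combD; [|apply: int_combN]; apply: yx_comb_monomial.
Qed.

Lemma yx_comb1 : yx_comb 1.
Proof. by rewrite -(mulr1 1) -{1}(expr0 y) -(expr0 x); apply: yx_comb_monomial. Qed.

Lemma yx_comb_mul a b : yx_comb a -> yx_comb b -> yx_comb (a * b).
Proof.
move=> comb_a comb_b; apply: int_comb_mulr comb_a => i j; rewrite -mulrA.
elim: (nat_of_ord i) => [|k IHk]; last by rewrite exprS -mulrA; apply: yx_comb_mulyl.
rewrite expr0 mul1r; elim: (nat_of_ord j) => [|k IHk]; first by rewrite expr0 mul1r.
by rewrite exprS -mulrA; apply: yx_comb_mulxl.
Qed.

Lemma yx_comb_nceval t : yx_comb (nceval x y t).
Proof.
elim: t => [c| | |s IHs u IHu|s IHs|s IHs u IHu] /=.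
- by rewrite -[c%:~R]/(1 *~ c); apply/int_combMz/yx_comb1.
- by rewrite -[x]mulr1; apply/yx_comb_mulxl/yx_comb1.
- by rewrite -[y]mulr1; apply/yx_comb_mulyl/yx_comb1.
- exact: int_combD.
- exact: int_combN.
- exact: yx_comb_mul.
Qed.

End NormalForm.

Theorem lemma2 (n : nat) (hn : (2 <= n)%N) (A : pzRingType) (x y : A)
  (hrel : R_relations n x y) (t : ncterm) :
  exists c : 'I_n -> 'I_n -> int,
    nceval x y t = \sum_(i < n) \sum_(j < n) (y ^+ i * x ^+ j) *~ c i j.
Proof. by case: hrel => xn0 yn0 xy_rel; apply: yx_comb_nceval. Qed.
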